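(* Let $\Sigma$ be a rotational $V$-translator in $\mathrm{SL}(2,\mathbb R)$, $V=x\partial_x+y\partial_y$, whose generating curve $\alpha(s)=(x(s),y(s))$ satisfies $x'=2y\cos\varphi$, $y'=2y\sin\varphi$. (1) If $\varphi$ is constant, then $\varphi\equiv\pi/2$ and $\Sigma$ is the rotational surface with generating curve $\alpha(s)=(0,ce^{2s})$, $c>0$ (the straight line $x=0$). (2) If $\Sigma$ has constant mean curvature $H$, then $H=0$ and $\Sigma$ is the surface of item (1).
   Context: $\mathrm{SL}(2,\mathbb R)$ is given global coordinates $(x,y,\theta)\in\mathbb R\times(0,\infty)\times\mathbb R$ via $(x,y,\theta)\mapsto \begin{pmatrix}1&x\\0&1\end{pmatrix}\begin{pmatrix}\sqrt y&0\\0&1/\sqrt y\end{pmatrix}\begin{pmatrix}\cos\theta&\sin\theta\\-\sin\theta&\cos\theta\end{pmatrix}$, with the metric $\langle\,,\rangle=\frac{dx^2+dy^2}{4y^2}+\left(d\theta+\frac{dx}{2y}\right)^2$. Orthonormal frame: $e_1=2y\partial_x-\partial_\theta$, $e_2=2y\partial_y$, $e_3=\partial_\theta$; $V=\frac{1}{2y}(xe_1+ye_2+xe_3)$. A surface with unit normal $N$ and mean curvature $H$ (average of principal curvatures w.r.t. $N$) is a $V$-translator if $H=\langle N,V\rangle$. Rotational surfaces are those parametrized as $(s,t)\mapsto(x(s),y(s),t)$; when $x'=2y\cos\varphi$, $y'=2y\sin\varphi$, one has $N=-\sin\varphi\,e_1+\cos\varphi\,e_2$ and $H=\frac{\varphi'}{2}+\cos\varphi$.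 *)

From Stdlib Require Import Reals Lra.
From Coquelicot Require Import Coquelicot.
Open Scope R_scope.

(* Euclidean inner product of two vectors written in the orthonormal frame
   (e1,e2,e3) of SL(2,R). *)
Definition frame_inner (a1 a2 a3 b1 b2 b3 : R) : R := a1*b1 + a2*b2 + a3*b3.

(* V = (1/(2y)) (x e1 + y e2 + x e3) at the point (x,y,theta). *)
Definition V1 (x y : R) : R := x / (2*y).
Definition V2 (x y : R) : R := y / (2*y).
Definition V3 (x y : R) : R := x / (2*y).

(* Unit normal N = -sin(phi) e1 + cos(phi) e2 of a rotational surface. *)
Definition N1 (phi : R) : R := - sin phi.
Definition N2 (phi : R) : R := cos phi.
Definition N3 (phi : R) : R := 0.

Definition NV (x y phi : R -> R) (s : R) : R :=
  frame_inner (N1 (phi s)) (N2 (phi s)) (N3 (phi s))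
              (V1 (x s) (y s)) (V2 (x s) (y s)) (V3 (x s) (y s)).

Definition mean_curv (phi : R -> R) (s : R) : R := Derive phi s / 2 + cos (phi s).

Definition in_I (a b : Rbar) (s : R) : Prop := Rbar_lt a s /\ Rbar_lt s b.

Definition rot_generating_curve (a b : Rbar) (x y phi : R -> R) : Prop :=
  Rbar_lt a b /\
  forall s, in_I a b s ->
    0 < y s /\
    is_derive x s (2 * y s * cos (phi s)) /\
    is_derive y s (2 * y s * sin (phi s)) /\
    ex_derive phi s.

Definition V_translator (a b : Rbar) (x y phi : R -> R) : Prop :=
  forall s, in_I a b s -> mean_curv phi s = NV x y phi s.

(* phi is constant phi0 = pi/2 (mod pi, i.e. up to the orientation of the
   parameter) and the curve is alpha(s) = (0, c e^{2s}) (resp. (0, c e^{-2s})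
   for the opposite orientation), c > 0: the straight line x = 0. *)
Definition is_item1_surface (a b : Rbar) (x y phi : R -> R) : Prop :=
  exists phi0 : R,
    (forall s, in_I a b s -> phi s = phi0) /\
    cos phi0 = 0 /\
    exists c : R, 0 < c /\
      forall s, in_I a b s -> x s = 0 /\ y s = c * exp (2 * sin phi0 * s).

From Stdlib Require Import Reals Lra.
From Coquelicot Require Import Coquelicot.
Open Scope R_scope.

(* The translator equation reads y phi' + y cos phi + x sin phi = 0.  If phi is
   a constant phi0, differentiating cos phi0 y + sin phi0 x = 0 along the curve
   gives 4 y sin phi0 cos phi0 = 0, and y > 0 forces cos phi0 = 0, so x = 0 and
   y' = 2 sin phi0 y.  If H is constant then phi' = 2H - 2 cos phi; eliminating x
   between the translator equation and its derivative yields
   cos phi = 3H / (2H^2 + 1), so phi' is constant, and a nonzero constant phi' is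
   incompatible with cos phi being constant.  Hence phi is constant and
   H = cos phi0 = 0. *)

(* [auto_derive] expresses derivatives as [Derive (fun u => f u) t], which is
   why known derivatives are rewritten with [is_derive_unique (fun u : R => f u)]. *)
Local Ltac ex_derive_by_hyps := repeat first [assumption | eexists; eassumption | split].

Section OpenInterval.

Variables a b : Rbar.

Lemma in_I_locally s : in_I a b s -> locally s (in_I a b).
Proof.
  intros Hs.
  apply (open_and (fun u : R => Rbar_lt a u) (fun u : R => Rbar_lt u b)); auto.
  - apply open_Rbar_gt.
  - apply open_Rbar_lt.
Qed.

Lemma in_I_between s s0 t :
  in_I a b s -> in_I a b s0 -> Rmin s s0 <= t <= Rmax s s0 -> in_I a b t.
Proof.
  intros [Has Hsb] [Has0 Hs0b] Ht.
  split.
  - apply Rbar_lt_le_trans with (Rmin s s0); [| simpl; lra].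
    unfold Rmin; destruct (Rle_dec s s0); auto.
  - apply Rbar_le_lt_trans with (Rmax s s0); [simpl; lra |].
    unfold Rmax; destruct (Rle_dec s s0); auto.
Qed.

Lemma in_I_inhabited : Rbar_lt a b -> exists s, in_I a b s.
Proof.
  destruct a as [a'| |], b as [b'| |]; simpl; intros Hab; try contradiction.
  - exists ((a' + b') / 2); split; simpl; lra.
  - exists (a' + 1); split; simpl; auto; lra.
  - exists (b' - 1); split; simpl; auto; lra.
  - exists 0; split; simpl; auto.
Qed.

Lemma is_derive_const_on_I (f : R -> R) C s l :
  (forall t, in_I a b t -> f t = C) -> in_I a b s -> is_derive f s l -> l = 0.
Proof.
  intros Hf Hs Hd.
  assert (Hc : is_derive (fun _ => C) s l).
  { apply (is_derive_ext_loc f); auto.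
    apply (filter_imp (in_I a b)); auto using in_I_locally. }
  rewrite <- (is_derive_unique _ _ _ Hc). apply Derive_const.
Qed.

Lemma const_on_I_of_derive0 (f : R -> R) :
  (forall t, in_I a b t -> is_derive f t 0) ->
  forall s s0, in_I a b s -> in_I a b s0 -> f s = f s0.
Proof.
  intros Hd s s0 Hs Hs0.
  destruct (MVT_gen f s s0 (fun _ => 0)) as [c [_ Hc]].
  - intros t Ht. apply Hd, (in_I_between s s0); auto; lra.
  - intros t Ht. apply continuity_pt_filterlim.
    apply (ex_derive_continuous (K := R_AbsRing) (V := R_NormedModule)).
    eexists. apply Hd, (in_I_between s s0); auto.
  - lra.
Qed.

Lemma linear_ode_on_I (f : R -> R) k :
  (forall t, in_I a b t -> is_derive f t (k * f t)) ->
  forall s s0, in_I a b s -> in_I a b s0 -> f s = f s0 * exp (- k * s0) * exp (k * s).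
Proof.
  intros Hd s s0 Hs Hs0.
  assert (Hg : forall t, in_I a b t -> is_derive (fun u => f u * exp (- k * u)) t 0).
  { intros t Ht. auto_derive; [eexists; apply Hd; auto |].
    rewrite (is_derive_unique (fun u : R => f u) _ _ (Hd t Ht)). ring. }
  rewrite <- (const_on_I_of_derive0 _ Hg s s0 Hs Hs0).
  rewrite Rmult_assoc, <- exp_plus.
  replace (- k * s + k * s) with 0 by ring.
  rewrite exp_0; ring.
Qed.

Lemma derive0_of_cos_const (phi : R -> R) c k :
  Rbar_lt a b ->
  (forall t, in_I a b t -> cos (phi t) = c) ->
  (forall t, in_I a b t -> is_derive phi t k) -> k = 0.
Proof.
  intros Hab Hc Hd.
  destruct (Req_dec k 0) as [|Hk]; auto.
  assert (Hsin : forall t, in_I a b t -> sin (phi t) = 0).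
  { intros t Ht.
    assert (Hdc : is_derive (fun u => cos (phi u)) t (- sin (phi t) * k)).
    { auto_derive; [eexists; apply Hd; auto |].
      rewrite (is_derive_unique (fun u : R => phi u) _ _ (Hd t Ht)). ring. }
    pose proof (is_derive_const_on_I _ _ _ _ Hc Ht Hdc). nra. }
  destruct (in_I_inhabited Hab) as [s0 Hs0].
  assert (Hds : is_derive (fun u => sin (phi u)) s0 (cos (phi s0) * k)).
  { auto_derive; [eexists; apply Hd; auto |].
    rewrite (is_derive_unique (fun u : R => phi u) _ _ (Hd s0 Hs0)). ring. }
  pose proof (is_derive_const_on_I _ _ _ _ Hsin Hs0 Hds).
  pose proof (sin2_cos2 (phi s0)) as Hpyth. unfold Rsqr in Hpyth.
  rewrite (Hsin s0 Hs0) in Hpyth. nra.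
Qed.

End OpenInterval.

Section RotationalTranslator.

Variables (a b : Rbar) (x y phi : R -> R).
Hypothesis Hcurve : rot_generating_curve a b x y phi.
Hypothesis Htrans : V_translator a b x y phi.

Lemma translator_ode s :
  in_I a b s -> y s * Derive phi s + y s * cos (phi s) + x s * sin (phi s) = 0.
Proof.
  intros Hs. pose proof (Htrans s Hs) as Ht.
  destruct (proj2 Hcurve s Hs) as [Hy _].
  unfold mean_curv, NV, frame_inner, N1, N2, N3, V1, V2, V3 in Ht.
  replace (y s / (2 * y s)) with (/ 2) in Ht by (field; lra).
  replace (x s) with (x s / (2 * y s) * (2 * y s)) by (field; lra).
  replace (Derive phi s) with (- 2 * sin (phi s) * (x s / (2 * y s)) - cos (phi s)) by lra.
  ring.
Qed.

Lemma phi_const_vertical phi0 :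
  (forall s, in_I a b s -> phi s = phi0) ->
  cos phi0 = 0 /\ forall s, in_I a b s -> x s = 0.
Proof.
  intros Hphi.
  assert (Hline : forall s, in_I a b s -> cos phi0 * y s + sin phi0 * x s = 0).
  { intros s Hs.
    assert (Hd0 : Derive phi s = 0).
    { destruct (proj2 Hcurve s Hs) as (_ & _ & _ & Hex).
      apply (is_derive_const_on_I a b phi phi0 s); auto. apply Derive_correct, Hex. }
    pose proof (translator_ode s Hs) as E. rewrite Hd0, Hphi in E; auto. lra. }
  destruct (in_I_inhabited a b (proj1 Hcurve)) as [s0 Hs0].
  destruct (proj2 Hcurve s0 Hs0) as (Hy & Hx & Hy' & _).
  rewrite Hphi in Hx, Hy'; auto.
  assert (Hd : is_derive (fun t => cos phi0 * y t + sin phi0 * x t) s0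
                 (4 * y s0 * sin phi0 * cos phi0)).
  { auto_derive; [ex_derive_by_hyps |].
    rewrite (is_derive_unique (fun u : R => x u) _ _ Hx),
            (is_derive_unique (fun u : R => y u) _ _ Hy'). ring. }
  pose proof (is_derive_const_on_I a b _ _ _ _ Hline Hs0 Hd) as Hsc.
  pose proof (Hline s0 Hs0) as H0.
  pose proof (sin2_cos2 phi0) as Hpyth. unfold Rsqr in Hpyth.
  assert (Hcos : cos phi0 = 0).
  { destruct (Rmult_integral _ _ Hsc) as [Hys | Hc]; [exfalso | exact Hc].
    assert (Hsin : sin phi0 = 0) by nra.
    rewrite Hsin in H0, Hpyth.
    assert (cos phi0 = 0) by nra. nra. }
  split; auto.
  intros s Hs. pose proof (Hline s Hs) as E. rewrite Hcos in E, Hpyth. nra.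
Qed.

Lemma item1_of_phi_const phi0 :
  (forall s, in_I a b s -> phi s = phi0) -> is_item1_surface a b x y phi.
Proof.
  intros Hphi.
  destruct (phi_const_vertical phi0 Hphi) as [Hcos Hx0].
  destruct (in_I_inhabited a b (proj1 Hcurve)) as [s0 Hs0].
  assert (Hode : forall t, in_I a b t -> is_derive y t (2 * sin phi0 * y t)).
  { intros t Ht. destruct (proj2 Hcurve t Ht) as (_ & _ & Hy' & _).
    rewrite Hphi in Hy'; auto. replace (2 * sin phi0 * y t) with (2 * y t * sin phi0) by ring.
    exact Hy'. }
  exists phi0; split; [exact Hphi | split; [exact Hcos |]].
  exists (y s0 * exp (- (2 * sin phi0) * s0)); split.
  - destruct (proj2 Hcurve s0 Hs0) as [Hy _].
    apply Rmult_lt_0_compat; [exact Hy | apply exp_pos].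
  - intros s Hs. split; [auto |]. apply (linear_ode_on_I a b); auto.
Qed.

Lemma cos_phi_of_cmc H :
  (forall s, in_I a b s -> mean_curv phi s = H) ->
  forall s, in_I a b s -> cos (phi s) = 3 * H / (2 * H * H + 1).
Proof.
  intros HH.
  assert (HD : forall s, in_I a b s -> Derive phi s = 2 * H - 2 * cos (phi s)).
  { intros s Hs. specialize (HH s Hs). unfold mean_curv in HH. lra. }
  assert (Hode : forall s, in_I a b s ->
            2 * H * y s - y s * cos (phi s) + x s * sin (phi s) = 0).
  { intros s Hs. pose proof (translator_ode s Hs) as E. rewrite HD in E; auto. lra. }
  intros s Hs. destruct (proj2 Hcurve s Hs) as (Hy & Hx & Hy' & Hex).
  assert (Hd : is_derive (fun t => 2 * H * y t - y t * cos (phi t) + x t * sin (phi t)) s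
                 (4 * H * y s * sin (phi s) + (y s * sin (phi s) + x s * cos (phi s))
                    * (2 * H - 2 * cos (phi s)))).
  { auto_derive; [ex_derive_by_hyps |].
    rewrite (is_derive_unique (fun u : R => x u) _ _ Hx),
            (is_derive_unique (fun u : R => y u) _ _ Hy'), HD by auto. ring. }
  pose proof (is_derive_const_on_I a b _ _ _ _ Hode Hs Hd) as Hdiff.
  pose proof (Hode s Hs) as H0.
  pose proof (sin2_cos2 (phi s)) as Hpyth. unfold Rsqr in Hpyth.
  set (c := cos (phi s)) in *; set (sn := sin (phi s)) in *.
  (* eliminate x between the equation and its derivative *)
  assert (Hy0 : y s * (6 * H - 4 * H * H * c - 2 * c) = 0).
  { transitivity (sn * (4 * H * y s * sn + (y s * sn + x s * c) * (2 * H - 2 * c))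
                  - c * (2 * H - 2 * c) * (2 * H * y s - y s * c + x s * sn)
                  + y s * (6 * H - 2 * c) * (1 - (sn * sn + c * c))); [ring |].
    rewrite Hdiff, H0, Hpyth. ring. }
  assert (0 < 2 * H * H + 1) by nra.
  apply Rmult_integral in Hy0. destruct Hy0; [lra |].
  field_simplify_eq; lra.
Qed.

End RotationalTranslator.

Theorem mainTheorem4 (a b : Rbar) (x y phi : R -> R) :
  rot_generating_curve a b x y phi ->
  V_translator a b x y phi ->
  ((exists phi0 : R, forall s, in_I a b s -> phi s = phi0) ->
     is_item1_surface a b x y phi) /\
  (forall H : R, (forall s, in_I a b s -> mean_curv phi s = H) ->
     H = 0 /\ is_item1_surface a b x y phi).
Proof.
  intros Hcurve Htrans. split.
  { intros [phi0 Hphi]. exact (item1_of_phi_const a b x y phi Hcurve Htrans phi0 Hphi). }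
  intros H HH.
  pose proof (cos_phi_of_cmc a b x y phi Hcurve Htrans H HH) as Hcos.
  set (c0 := 3 * H / (2 * H * H + 1)) in Hcos.
  assert (Hd : forall s, in_I a b s -> is_derive phi s (2 * H - 2 * c0)).
  { intros s Hs. destruct (proj2 Hcurve s Hs) as (_ & _ & _ & Hex).
    rewrite <- (Hcos s Hs). replace (2 * H - 2 * cos (phi s)) with (Derive phi s).
    - apply Derive_correct, Hex.
    - specialize (HH s Hs). unfold mean_curv in HH. lra. }
  pose proof (derive0_of_cos_const a b phi c0 _ (proj1 Hcurve) Hcos Hd) as Hk.
  rewrite Hk in Hd.
  destruct (in_I_inhabited a b (proj1 Hcurve)) as [s0 Hs0].
  assert (Hphi : forall s, in_I a b s -> phi s = phi s0)
    by (intros s Hs; exact (const_on_I_of_derive0 a b phi Hd s s0 Hs Hs0)).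
  destruct (phi_const_vertical a b x y phi Hcurve Htrans (phi s0) Hphi) as [Hcos0 _].
  split; [| exact (item1_of_phi_const a b x y phi Hcurve Htrans (phi s0) Hphi)].
  rewrite <- (HH s0 Hs0). unfold mean_curv.
  rewrite (is_derive_unique _ _ _ (Hd s0 Hs0)), Hcos0. lra.
Qed.
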